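(* Let $d\ge1$ and $L\ge 1$ be integers and let $\Phi\in\mathbb{R}^{d\times d}$ be arbitrary. Consider the loss $$\mathcal{R}(W_1,\dots,W_L)=\tfrac12\|W_LW_{L-1}\cdots W_1-\Phi\|_F^2,\qquad W_l\in\mathbb{R}^{d\times d},$$ and discrete-time gradient descent with fixed learning rate $\eta>0$, $$W_l(t+1)=W_l(t)-\eta\nabla_l\mathcal{R}(t),\qquad l=1,\dots,L,\ t=0,1,2,\dots,$$ started from the zero-asymmetric initialization $W_l(0)=I$ for $l=1,\dots,L-1$ and $W_L(0)=0$. Let $\phi=\max\{2\|\Phi\|_F,\,3L^{-1/2},\,1\}$. If $$\eta\le\min\left\{(4L^3\phi^6)^{-1},\ (144L^2\phi^4)^{-1}\right\},$$ then $$\mathcal{R}(t)\le\left(1-\frac{\eta}{2}\right)^t\mathcal{R}(0)\qquad\text{for all } t=0,1,2,\dots$$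
   Context: For $l_2\ge l_1$ write $W_{l_2:l_1}=W_{l_2}W_{l_2-1}\cdots W_{l_1}$, and an empty product is the identity matrix $I\in\mathbb{R}^{d\times d}$. The gradient of $\mathcal{R}$ with respect to $W_l$ is $\nabla_l\mathcal{R}=W_{L:l+1}^\intercal(W_{L:1}-\Phi)W_{l-1:1}^\intercal$. $\mathcal{R}(t)$ and $\nabla_l\mathcal{R}(t)$ denote the loss and gradient evaluated at the iterate $(W_1(t),\dots,W_L(t))$. $\|\cdot\|_F$ is the Frobenius norm. *)

From mathcomp Require Import all_boot all_order all_algebra.
From mathcomp Require Import reals.
Set Implicit Arguments. Unset Strict Implicit. Unset Printing Implicit Defensive.
Import Order.TTheory GRing.Theory Num.Theory.
Local Open Scope ring_scope.

Section Defs.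
Variables (R : realType) (d : nat).

(* A family of weights: W l for l = 1..L (values at other indices are irrelevant). *)
Definition weights := nat -> 'M[R]_d.

(* prodW W l2 l1 = W l2 *m W (l2-1) *m ... *m W l1 for l2 >= l1;
   the empty product (l2 < l1) is the identity matrix. *)
Fixpoint prodW_aux (W : weights) (l1 : nat) (k : nat) : 'M[R]_d :=
  match k with
  | 0 => 1%:M
  | k'.+1 => W (l1 + k')%N *m prodW_aux W l1 k'
  end.
Definition prodW (W : weights) (l2 l1 : nat) : 'M[R]_d :=
  prodW_aux W l1 (l2.+1 - l1)%N.

Definition frob (A : 'M[R]_d) : R :=
  Num.sqrt (\sum_(i < d) \sum_(j < d) A i j ^+ 2).

Definition loss (L : nat) (Phi : 'M[R]_d) (W : weights) : R :=
  2^-1 * frob (prodW W L 1 - Phi) ^+ 2.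

Definition grad (L : nat) (Phi : 'M[R]_d) (W : weights) (l : nat) : 'M[R]_d :=
  (prodW W L l.+1)^T *m (prodW W L 1 - Phi) *m (prodW W l.-1 1)^T.

Definition init (L : nat) : weights :=
  fun l => if l == L then 0 else 1%:M.

Fixpoint gd (L : nat) (Phi : 'M[R]_d) (eta : R) (t : nat) : weights :=
  match t with
  | 0 => init L
  | t'.+1 => let W := gd L Phi eta t' in
             fun l => W l - eta *: grad L Phi W l
  end.

End Defs.

(* Under the zero-asymmetric initialisation the iterates stay polynomial in M = Phi^T Phi:
   every hidden layer equals p_t(M) and the output layer equals Phi q_t(M), where the pair
   (p_t, q_t) follows the recursion gd_pair_step with the indeterminate 'X in place of an
   eigenvalue.  Diagonalising M, the loss becomes 1/2 sum_i lam_i r_t(lam_i)^2 with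
   r = q p^(L-1) - 1 and eigenvalues 0 <= lam_i <= |Phi|_F^2, so it suffices to contract
   each scalar residual.  Along the scalar recursion (a, b) = (p_t(lam), q_t(lam)) both a >= 1
   and b >= 0 increase while the residual stays in [-1, 0] and shrinks by the factor 1 - eta;
   the balance a^2 - lam b^2 only gets multiplied by factors in [0, 1], which bounds
   a^(2(L-1)) by 2 + 2(L-1)|Phi|_F^2 and prevents overshooting. *)

From mathcomp Require Import all_boot all_order all_algebra.
From mathcomp Require Import reals.
From mathcomp Require Import complex.
From mathcomp Require Import ring lra zify.
Set Implicit Arguments. Unset Strict Implicit. Unset Printing Implicit Defensive.
Import Order.TTheory GRing.Theory Num.Theory.
Local Open Scope ring_scope.

Lemma trmx_horner_mx (R : comNzRingType) n (S : 'M[R]_n.+1) (g : {poly R}) :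
  (horner_mx S g)^T = horner_mx S^T g.
Proof.
elim/poly_ind: g => [|p c IH]; first by rewrite !rmorph0 trmx0.
rewrite !rmorphD !rmorphM /= !horner_mx_X !horner_mx_C linearD /= tr_scalar_mx.
by rewrite -!mulmxE trmx_mul IH (comm_mx_horner p (erefl _ : comm_mx S^T S^T)).
Qed.

Lemma mxtrace_mul_trmx (R : pzRingType) m n (A : 'M[R]_(m, n)) :
  \tr (A *m A^T) = \sum_i \sum_j A i j ^+ 2.
Proof.
apply: eq_bigr => i _; rewrite mxE.
by apply: eq_bigr => j _; rewrite !mxE expr2.
Qed.

Lemma frob_sqr (R : realType) n (A : 'M[R]_n) : frob A ^+ 2 = \tr (A *m A^T).
Proof.
rewrite mxtrace_mul_trmx sqr_sqrtr //.
by apply: sumr_ge0 => i _; apply: sumr_ge0 => j _; apply: sqr_ge0.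
Qed.

Lemma mxtrace_horner_sym (R : realType) n (S : 'M[R]_n.+1) :
  S^T = S ->
  exists lam : 'I_n.+1 -> R, forall g, \tr (horner_mx S g) = \sum_i g.[lam i].
Proof.
move=> Ssym; pose f := real_complex R; pose Sc := map_mx f S.
have herm : Sc \is hermsymmx.
  apply/is_hermitianmxP; rewrite expr0 scale1r.
  apply/matrixP => i j; rewrite !mxE.
  by rewrite -{1}Ssym mxE; apply/esym/conjc_real.
have /orthomx_spectralP Sc_eq := hermitian_normalmx herm.
have Dreal := hermitian_spectral_diag_real herm.
set P := spectralmx Sc in Sc_eq; set D := spectral_diag Sc in Sc_eq Dreal.
exists (fun i => complex.Re (D 0 i)) => g.
apply: (fmorph_inj f).
have PU : invmx P \in unitmx by rewrite unitmx_inv spectral_unit.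
rewrite -trace_map_mx map_horner_mx -/Sc Sc_eq -[in X in _ *m X](invmxK P).
rewrite horner_mx_uconj // mxtrace_mulC mulmxA mulVmx // mul1mx.
rewrite horner_mx_diag mxtrace_diag rmorph_sum; apply: eq_bigr => i _.
rewrite !mxE -horner_map /=; congr (_.[_]).
by rewrite complexRe; apply/esym/Creal_ReP/(mxOverP Dreal).
Qed.

Section Gram.
Variables (R : realType) (m n : nat) (Phi : 'M[R]_(m, n.+1)).
Local Notation H := (horner_mx (Phi^T *m Phi)).

Lemma gram_sym : (Phi^T *m Phi)^T = Phi^T *m Phi.
Proof. by rewrite trmx_mul trmxK. Qed.

Lemma horner_gram_sym g : (H g)^T = H g.
Proof. by rewrite trmx_horner_mx gram_sym. Qed.

Lemma horner_gram_inner g h : (Phi *m H g)^T *m (Phi *m H h) = H (g * 'X * h).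
Proof.
rewrite !rmorphM /= horner_mx_X -!mulmxE trmx_mul horner_gram_sym.
by rewrite !mulmxA.
Qed.

Lemma mxtrace_horner_gram_ge0 g : 0 <= \tr (H ('X * g ^+ 2)).
Proof.
rewrite (_ : 'X * g ^+ 2 = g * 'X * g); last by rewrite expr2; ring.
rewrite -horner_gram_inner mxtrace_mulC mxtrace_mul_trmx.
by apply: sumr_ge0 => i _; apply: sumr_ge0 => j _; apply: sqr_ge0.
Qed.

Lemma gram_eigen_ge0 (lam : 'I_n.+1 -> R) :
  (forall g, \tr (H g) = \sum_i g.[lam i]) -> forall i, 0 <= lam i.
Proof.
move=> Htr i.
pose g := \prod_(j | lam j != lam i) ('X - (lam j)%:P).
have gi_neq0 : g.[lam i] != 0.
  rewrite horner_prod; apply/prodf_neq0 => j ne.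
  by rewrite hornerXsubC subr_eq0 eq_sym.
have gE j : ('X * g ^+ 2).[lam j] = (lam i * g.[lam i] ^+ 2) *+ (lam j == lam i).
  rewrite hornerM hornerX horner_exp; have [->|ne] := eqVneq (lam j) (lam i).
    by rewrite mulr1n.
  by rewrite horner_prod (bigD1 j) //= hornerXsubC subrr mul0r expr0n mulr0.
have := mxtrace_horner_gram_ge0 g.
rewrite Htr (eq_bigr _ (fun j _ => gE j)) sumrMnr pmulrn_lge0; last first.
  by rewrite (bigD1 i) //= eqxx.
by rewrite pmulr_lge0 // exprn_even_gt0.
Qed.

End Gram.

Section ProdW.
Variables (R : realType) (d : nat) (W : weights R d.+1) (P : 'M[R]_d.+1).

Lemma prodW_aux_const l1 k :
  (forall j, (j < k)%N -> W (l1 + j)%N = P) -> prodW_aux W l1 k = P ^+ k.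
Proof.
elim: k => [|k IH] WP; first by rewrite expr0 /= idmxE.
by rewrite /= WP // IH => [|j /ltnW]; [rewrite exprS mulmxE | apply: WP].
Qed.

Lemma prodW_const_below L l1 :
  (l1 <= L)%N -> (forall j, (l1 <= j < L)%N -> W j = P) ->
  prodW W L l1 = W L *m P ^+ (L - l1).
Proof.
move=> l1L WP; rewrite /prodW subSn //= subnKC //.
by congr (_ *m _); apply: prodW_aux_const => j jk; apply: WP; lia.
Qed.

Lemma prodW1_const l :
  (forall j, (1 <= j <= l)%N -> W j = P) -> prodW W l 1 = P ^+ l.
Proof.
move=> WP; rewrite /prodW subn1 /=; apply: prodW_aux_const => j jl.
by apply: WP; lia.
Qed.

Lemma prodW_empty L : prodW W L L.+1 = 1%:M.
Proof. by rewrite /prodW subnn. Qed.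

End ProdW.

Definition pair_residual (T : comNzRingType) n (ab : T * T) := ab.2 * ab.1 ^+ n - 1.

Definition gd_pair_step (T : comNzRingType) n (e x : T) (ab : T * T) : T * T :=
  (ab.1 - e * (x * ab.2 * pair_residual n ab * ab.1 ^+ n.-1),
   ab.2 - e * (pair_residual n ab * ab.1 ^+ n)).

Definition gd_pair (T : comNzRingType) n (e x : T) t := iter t (gd_pair_step n e x) (1, 0).

Lemma horner_gd_pair (T : comNzRingType) n (e x : T) t :
  gd_pair n e x t = ((gd_pair n e%:P 'X t).1.[x], (gd_pair n e%:P 'X t).2.[x]).
Proof.
elim: t => [|t IH]; first by rewrite /= hornerC horner0.
rewrite /gd_pair !iterS -!/(gd_pair _ _ _ _) IH /gd_pair_step /pair_residual /=.
by rewrite !hornerE.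
Qed.

Section GradientDescent.
Variables (R : realType) (d n : nat) (Phi : 'M[R]_d.+1) (eta : R).
Local Notation H := (horner_mx (Phi^T *m Phi)).

Definition poly_form (W : weights R d.+1) (pq : {poly R} * {poly R}) :=
  (forall l, (1 <= l <= n)%N -> W l = H pq.1) /\ W n.+1 = Phi *m H pq.2.

Section PolyForm.
Variables (W : weights R d.+1) (p q : {poly R}).
Hypothesis Wpq : poly_form W (p, q).
Local Notation c := (pair_residual n (p, q)).

Lemma poly_form_prodW_below l :
  (1 <= l <= n.+1)%N -> prodW W n.+1 l = Phi *m H (q * p ^+ (n.+1 - l)).
Proof.
case: Wpq => Wp Wq /andP[l1 ln]; rewrite (@prodW_const_below _ _ _ (H p)) //.
  by rewrite Wq rmorphM rmorphXn -mulmxE mulmxA.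
by move=> j /andP[lj jn]; apply: Wp; lia.
Qed.

Lemma poly_form_prodW1 l : (l <= n)%N -> prodW W l 1 = H (p ^+ l).
Proof.
case: Wpq => Wp _ ln; rewrite rmorphXn; apply: prodW1_const => j jl.
by apply: Wp; lia.
Qed.

Lemma poly_form_residual : prodW W n.+1 1 - Phi = Phi *m H c.
Proof.
rewrite poly_form_prodW_below // subn1 /pair_residual /=.
by rewrite rmorphB rmorph1 mulmxBr mulmx1.
Qed.

Lemma poly_form_grad_hidden l : (1 <= l <= n)%N ->
  grad n.+1 Phi W l = H ('X * q * c * p ^+ n.-1).
Proof.
move=> /andP[l1 ln].
rewrite /grad poly_form_residual poly_form_prodW_below; last by lia.
rewrite poly_form_prodW1; last by lia.
rewrite horner_gram_inner horner_gram_sym mulmxE -rmorphM.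
have -> : n.-1 = (n.+1 - l.+1 + l.-1)%N by lia.
by congr (H _); rewrite exprD; ring.
Qed.

Lemma poly_form_grad_out : grad n.+1 Phi W n.+1 = Phi *m H (c * p ^+ n).
Proof.
rewrite /grad poly_form_residual prodW_empty trmx1 mul1mx poly_form_prodW1 //.
by rewrite horner_gram_sym -mulmxA mulmxE -rmorphM.
Qed.

End PolyForm.

Lemma poly_form_gd t : poly_form (gd n.+1 Phi eta t) (gd_pair n eta%:P 'X t).
Proof.
elim: t => [|t]; rewrite /gd_pair ?iterS -/(gd_pair _ _ _ _).
  split=> [l /andP[l1 ln]|]; rewrite /= /init ?eqxx.
    by rewrite ifN ?rmorph1 ?idmxE //; lia.
  by rewrite rmorph0 mulmx0.
case: (gd_pair n eta%:P 'X t) => p q Wpq; split=> [l ll|] /=.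
  rewrite (poly_form_grad_hidden Wpq ll) (proj1 Wpq l ll).
  by rewrite mul_polyC rmorphB /= horner_mxZ.
rewrite (poly_form_grad_out Wpq) (proj2 Wpq).
by rewrite mul_polyC rmorphB /= horner_mxZ scalemxAr -mulmxBr.
Qed.

Lemma loss_poly_form W pq : poly_form W pq ->
  loss n.+1 Phi W = 2^-1 * \tr (H (pair_residual n pq * 'X * pair_residual n pq)).
Proof.
case: pq => p q Wpq.
by rewrite /loss (poly_form_residual Wpq) frob_sqr mxtrace_mulC horner_gram_inner.
Qed.

Lemma loss_gd_eigen (lam : 'I_d.+1 -> R) :
  (forall g, \tr (H g) = \sum_i g.[lam i]) -> forall t,
  loss n.+1 Phi (gd n.+1 Phi eta t) =
    2^-1 * \sum_i lam i * pair_residual n (gd_pair n eta (lam i) t) ^+ 2.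
Proof.
move=> Htr t; rewrite (loss_poly_form (poly_form_gd t)) Htr; congr (_ * _).
apply: eq_bigr => i _; rewrite (horner_gd_pair n eta (lam i)).
by rewrite /pair_residual !hornerE /=; ring.
Qed.

End GradientDescent.

Lemma reverse_bernoulli (R : realFieldType) n (x : R) :
  0 <= x -> 2 * n%:R * x <= 1 -> (1 + x) ^+ n <= 1 + 2 * n%:R * x.
Proof.
move=> x_ge0; elim: n => [|n IH]; first by rewrite expr0 mulr0 mul0r addr0.
rewrite exprSr -[n.+1]addn1 natrD => small; have n_ge0 : 0 <= n%:R :> R by [].
have {}IH : (1 + x) ^+ n <= 1 + 2 * n%:R * x by apply: IH; nra.
by apply: (le_trans (ler_wpM2r _ IH)); nra.
Qed.

Lemma balanced_pow_le (R : realFieldType) n (lam Lam a b : R) :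
  0 <= lam -> lam <= Lam -> 0 <= a -> 0 <= b -> b * a ^+ n <= 1 ->
  a * a - lam * b * b <= 1 -> a ^+ n * a ^+ n <= 2 + 2 * n%:R * Lam.
Proof.
move=> lam_ge0 lam_le a_ge0 b_ge0 ba_le1 balance.
have n_ge0 : 0 <= n%:R :> R by [].
have ba_ge0 : 0 <= b * a ^+ n by rewrite mulr_ge0 ?exprn_ge0.
set x := lam * b * b in balance.
have x_ge0 : 0 <= x by rewrite !mulr_ge0.
have pow_le : a ^+ n * a ^+ n <= (1 + x) ^+ n.
  by rewrite -exprMn lerXn2r ?nnegrE ?mulr_ge0 //; lra.
have [small|large] := lerP (2 * n%:R * x) 1.
  by apply: (le_trans pow_le); apply: (le_trans (reverse_bernoulli x_ge0 small)); nra.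
have : a ^+ n * a ^+ n * x <= Lam.
  have -> : a ^+ n * a ^+ n * x = lam * ((b * a ^+ n) * (b * a ^+ n)) by rewrite /x; ring.
  by apply: le_trans lam_le; rewrite ler_piMr // -expr2 expr_le1.
have : 0 <= a ^+ n * a ^+ n by rewrite mulr_ge0 ?exprn_ge0.
nra.
Qed.

Section ScalarDynamics.
Variables (R : realType) (n : nat) (eta lam Lam : R).
Hypotheses (eta_gt0 : 0 < eta) (lam_ge0 : 0 <= lam) (lam_le : lam <= Lam).
Hypothesis eta_small : 4 * eta * (1 + n%:R * Lam) <= 1.
(* lra and nra do not see section hypotheses, hence the local copies in the proofs below. *)
Local Notation step := (gd_pair_step n eta lam).

Let n_ge0 : 0 <= n%:R :> R. Proof. by []. Qed.
Let Lam_ge0 : 0 <= Lam. Proof. exact: le_trans lam_le. Qed.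

Section OneStep.
Variables a b : R.
Hypotheses (a_ge1 : 1 <= a) (b_ge0 : 0 <= b) (ba_le1 : b * a ^+ n <= 1).
Local Notation s := (1 - b * a ^+ n).
Local Notation a' := (step (a, b)).1.
Local Notation b' := (step (a, b)).2.

Let a_ge0 : 0 <= a. Proof. exact: le_trans a_ge1. Qed.
Let eta_ge0 : 0 <= eta. Proof. exact: ltW. Qed.
Let s_ge0 : 0 <= s. Proof. by rewrite subr_ge0. Qed.
Let pow_ge1 : 1 <= a ^+ n. Proof. exact: exprn_ege1. Qed.
Let b_pow_pred_le1 : b * a ^+ n.-1 <= 1.
Proof. by apply: le_trans ba_le1; rewrite ler_wpM2l // ler_weXn2l // leq_pred. Qed.

Lemma step_expand :
  step (a, b) = (a + eta * lam * s * (b * a ^+ n.-1), b + eta * s * a ^+ n).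
Proof. by rewrite /gd_pair_step /pair_residual /=; congr (_, _); ring. Qed.

Let growth_a_ge0 : 0 <= eta * lam * s * (b * a ^+ n.-1).
Proof. by rewrite !mulr_ge0 ?exprn_ge0. Qed.
Let growth_b_ge0 : 0 <= eta * s * a ^+ n.
Proof. by rewrite !mulr_ge0 ?exprn_ge0. Qed.

Lemma step_ge : a <= a' /\ b <= b'.
Proof. by rewrite step_expand /=; split; rewrite lerDl. Qed.

Lemma residual_step_ge : (1 - eta) * (b * a ^+ n - 1) <= b' * a' ^+ n - 1.
Proof.
have [a_le b_le] := step_ge.
have : b' * a ^+ n <= b' * a' ^+ n.
  rewrite ler_wpM2l ?lerXn2r ?nnegrE //.
    exact: le_trans b_le.
  exact: le_trans a_le.
have : eta * s * 1 <= eta * s * (a ^+ n * a ^+ n).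
  by rewrite ler_wpM2l ?mulr_ge0 ?mulr_ege1.
rewrite step_expand /=; nra.
Qed.

Lemma residual_step_le :
  a ^+ n * a ^+ n <= 2 + 2 * n%:R * Lam -> b' * a' ^+ n <= 1.
Proof.
move=> pow_le; have [a_le b_le] := step_ge.
have eta_pos := eta_gt0; have eta_le := eta_small.
have eps_ge0 := growth_a_ge0; set eps := eta * lam * s * _ in eps_ge0 *.
set beta := 2 * n%:R * eta * Lam.
have beta_ge0 : 0 <= beta by rewrite !mulr_ge0.
have eps_le : eps <= eta * Lam * s.
  apply: le_trans (ler_piMr _ b_pow_pred_le1) _; first by rewrite !mulr_ge0.
  by rewrite ler_wpM2r // ler_wpM2l.
have s_le1 : s <= 1 by rewrite lerBlDr lerDl mulr_ge0 ?exprn_ge0.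
have a_gt0 : 0 < a := lt_le_trans ltr01 a_ge1.
set x := eps / a.
have x_ge0 : 0 <= x by rewrite divr_ge0.
have x_le : x <= eps by rewrite ler_pdivrMr // ler_peMr.
have a'E : a' = a * (1 + x).
  by rewrite step_expand /= -/eps /x mulrDr mulr1 mulrCA divff ?mulr1 ?gt_eqF.
have x_small : 2 * n%:R * x <= beta * s.
  rewrite /beta -!mulrA ler_wpM2l // ler_wpM2l //.
  by apply: le_trans x_le _; rewrite mulrA.
have beta_le : beta <= 2^-1 by rewrite /beta; nra.
have pow'_le : a' ^+ n <= a ^+ n * (1 + beta * s).
  rewrite a'E exprMn ler_wpM2l ?exprn_ge0 //.
  apply: le_trans (reverse_bernoulli x_ge0 _) _; last by lra.
  have : beta * s <= beta by rewrite ler_piMr.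
  lra.
apply: le_trans (ler_wpM2l (le_trans b_ge0 b_le) pow'_le) _.
have gap_ge0 : 0 <= 1 - eta * (a ^+ n * a ^+ n) - beta.
  by have := ler_wpM2l eta_ge0 pow_le; rewrite /beta; lra.
have : 0 <= s * (1 - eta * (a ^+ n * a ^+ n) - beta) by rewrite mulr_ge0.
have : 0 <= beta * s * s * (1 - eta * (a ^+ n * a ^+ n)) by rewrite !mulr_ge0 //; lra.
rewrite step_expand /=; lra.
Qed.

Lemma balance_stepE : (0 < n)%N ->
  a' * a' - lam * b' * b' =
    (a * a - lam * b * b) * (1 - (eta * s * a ^+ n.-1) ^+ 2 * lam).
Proof.
move=> n_gt0; rewrite step_expand /=.
have -> : a ^+ n = a * a ^+ n.-1 by rewrite -exprS prednK.
by ring.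
Qed.

Lemma balance_step : (0 < n)%N -> a ^+ n * a ^+ n <= 2 + 2 * n%:R * Lam ->
  0 <= a * a - lam * b * b <= 1 -> 0 <= a' * a' - lam * b' * b' <= 1.
Proof.
move=> n_gt0 pow_le /andP[bal_ge0 bal_le1]; rewrite balance_stepE //.
have eta_le := eta_small; have eta_pos := eta_gt0.
have n_ge1 : 1 <= n%:R :> R by rewrite ler1n.
have s_le1 : s <= 1 by rewrite lerBlDr lerDl mulr_ge0 ?exprn_ge0.
set y := a ^+ n.-1.
have y_ge0 : 0 <= y by rewrite exprn_ge0.
have y_le : y * y <= a ^+ n * a ^+ n.
  have y_le : y <= a ^+ n by rewrite ler_weXn2l // leq_pred.
  by rewrite ler_pM.
have Lam_le : Lam <= 1 + n%:R * Lam by have := ler_wpM2r Lam_ge0 n_ge1; lra.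
have f_le : (eta * s * y) ^+ 2 * lam <= 2 * (eta * (1 + n%:R * Lam)) ^+ 2.
  have -> : (eta * s * y) ^+ 2 * lam = eta ^+ 2 * (s ^+ 2 * ((y * y) * lam)) by ring.
  have -> : 2 * (eta * (1 + n%:R * Lam)) ^+ 2 =
            eta ^+ 2 * (1 * ((2 + 2 * n%:R * Lam) * (1 + n%:R * Lam))) by ring.
  rewrite ler_wpM2l ?sqr_ge0 // ler_pM ?sqr_ge0 ?mulr_ge0 ?expr_le1 //.
  rewrite ler_pM ?mulr_ge0 //; [exact: le_trans y_le pow_le | exact: le_trans Lam_le].
have f_ge0 : 0 <= (eta * s * y) ^+ 2 * lam by rewrite mulr_ge0 ?sqr_ge0.
have f_le1 : (eta * s * y) ^+ 2 * lam <= 1.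
  have etaQ_ge0 : 0 <= eta * (1 + n%:R * Lam) by rewrite mulr_ge0 ?addr_ge0 ?mulr_ge0.
  have etaQ_le : eta * (1 + n%:R * Lam) <= 4^-1 by lra.
  rewrite expr2 in f_le; nra.
have f_compl : 0 <= 1 - (eta * s * y) ^+ 2 * lam <= 1 by apply/andP; lra.
case/andP: f_compl => f_compl_ge0 f_compl_le1.
by rewrite mulr_ge0 //= (le_trans _ bal_le1) // ler_piMr.
Qed.

End OneStep.

Definition scalar_inv (ab : R * R) :=
  [/\ 1 <= ab.1, 0 <= ab.2, ab.2 * ab.1 ^+ n <= 1
    & (0 < n)%N -> 0 <= ab.1 * ab.1 - lam * ab.2 * ab.2 <= 1].

Lemma scalar_inv_pow_le a b : scalar_inv (a, b) ->
  a ^+ n * a ^+ n <= 2 + 2 * n%:R * Lam.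
Proof.
case=> /= a_ge1 b_ge0 ba_le1 balance; have [n0|n_gt0] := posnP n.
  by rewrite n0 expr0 mulr1 mulr0 mul0r addr0 ler1n.
have /andP[_ bal_le1] := balance n_gt0.
by apply: balanced_pow_le lam_ge0 lam_le _ b_ge0 ba_le1 bal_le1; apply: le_trans a_ge1.
Qed.

Lemma scalar_inv_step ab : scalar_inv ab -> scalar_inv (step ab).
Proof.
case: ab => a b inv_ab; have pow_le := scalar_inv_pow_le inv_ab.
case: inv_ab => /= a_ge1 b_ge0 ba_le1 balance.
have [a_le b_le] := step_ge a_ge1 b_ge0 ba_le1.
split.
- exact: le_trans a_le.
- exact: le_trans b_le.
- exact: residual_step_le.
- by move=> n_gt0; apply: balance_step => //; apply: balance.
Qed.

Lemma scalar_inv_gd_pair t : scalar_inv (gd_pair n eta lam t).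
Proof.
elim: t => [|t IH]; last exact: scalar_inv_step.
by split; rewrite /= ?mul0r ?ler01 // => _; rewrite mulr1 !mulr0 subr0 ler01 lexx.
Qed.

Lemma residual_step_sqr_le ab : scalar_inv ab ->
  pair_residual n (step ab) ^+ 2 <= (1 - eta / 2) * pair_residual n ab ^+ 2.
Proof.
case: ab => a b inv_ab; have pow_le := scalar_inv_pow_le inv_ab.
case: inv_ab => /= a_ge1 b_ge0 ba_le1 _.
have lower := residual_step_ge a_ge1 b_ge0 ba_le1.
have upper := residual_step_le a_ge1 b_ge0 ba_le1 pow_le.
have eta_pos := eta_gt0; have eta_le := eta_small.
have eta_le4 : eta <= 4^-1 by have := mulr_ge0 (ltW eta_pos) (mulr_ge0 n_ge0 Lam_ge0); lra.
have c_le0 : b * a ^+ n - 1 <= 0 by rewrite subr_le0.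
rewrite -subr_le0 in upper.
rewrite /pair_residual [(a, b).1]/= [(a, b).2]/=.
set c := b * a ^+ n - 1 in c_le0 lower *.
set c' := _ * _ - 1 in upper lower *.
have : c' ^+ 2 <= ((1 - eta) * c) ^+ 2.
  by rewrite -sqrrN -[X in _ <= X]sqrrN lerXn2r ?nnegrE; nra.
have : 0 <= c ^+ 2 := sqr_ge0 c.
nra.
Qed.

Lemma residual_gd_pair_sqr_le t :
  pair_residual n (gd_pair n eta lam t) ^+ 2 <= (1 - eta / 2) ^+ t.
Proof.
elim: t => [|t IH]; first by rewrite /pair_residual /= mul0r sub0r sqrrN expr1n.
have eta_pos := eta_gt0; have eta_le := eta_small.
have rate_ge0 : 0 <= 1 - eta / 2.
  by have := mulr_ge0 (ltW eta_pos) (mulr_ge0 n_ge0 Lam_ge0); lra.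
apply: le_trans (residual_step_sqr_le (scalar_inv_gd_pair t)) _.
by rewrite [in X in _ <= X]exprS ler_wpM2l.
Qed.

End ScalarDynamics.

Lemma step_size_small (R : realFieldType) n (eta phi Lam : R) :
  0 < eta -> 1 <= phi -> 0 <= Lam -> 4 * Lam <= phi ^+ 2 ->
  eta <= (144 * n.+1%:R ^+ 2 * phi ^+ 4)^-1 -> 4 * eta * (1 + n%:R * Lam) <= 1.
Proof.
move=> eta_gt0 phi_ge1 Lam_ge0 Lam_le eta_le.
have n_ge0 : 0 <= n%:R :> R by [].
have phi2_ge1 : 1 <= phi ^+ 2 by rewrite exprn_ege1.
have X_ge1 : 1 <= n.+1%:R * phi ^+ 2 by rewrite mulr_ege1 ?ler1n.
have B_gt0 : 0 < 144 * n.+1%:R ^+ 2 * phi ^+ 4.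
  by rewrite !mulr_gt0 ?exprn_gt0 // (lt_le_trans ltr01).
set X := n.+1%:R * phi ^+ 2 in X_ge1.
have BE : 144 * n.+1%:R ^+ 2 * phi ^+ 4 = 144 * X * X by rewrite /X; ring.
move: eta_le; rewrite -div1r ler_pdivlMr // BE => eta_le.
have nLam_le : 4 * (n%:R * Lam) <= X.
  have n_le : n%:R <= n.+1%:R :> R by rewrite ler_nat.
  have := ler_wpM2l n_ge0 Lam_le; have := ler_wpM2r (le_trans ler01 phi2_ge1) n_le.
  rewrite /X; nra.
have eta_ge0 := ltW eta_gt0.
have := ler_wpM2l eta_ge0 nLam_le.
have : eta * (5 * X) <= eta * (144 * X * X) by rewrite ler_wpM2l //; nra.
have : eta * 4 <= eta * (4 * X) by rewrite ler_wpM2l //; lra.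
lra.
Qed.

Theorem theorem2 (R : realType) (d L : nat) (Phi : 'M[R]_d) (eta : R) :
  (1 <= d)%N -> (1 <= L)%N -> 0 < eta ->
  let phi := Num.max (Num.max (2 * frob Phi) (3 / Num.sqrt (L%:R))) 1 in
  eta <= Num.min (4 * L%:R ^+ 3 * phi ^+ 6)^-1 (144 * L%:R ^+ 2 * phi ^+ 4)^-1 ->
  forall t : nat,
    loss L Phi (gd L Phi eta t) <= (1 - eta / 2) ^+ t * loss L Phi (gd L Phi eta 0).
Proof.
case: d Phi => [//|d] Phi _; case: L => [//|n] _ eta_gt0 phi eta_le t.
have [lam Htr] := mxtrace_horner_sym (gram_sym Phi).
have lam_ge0 := gram_eigen_ge0 Htr.
have sum_lam : \sum_i lam i = frob Phi ^+ 2.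
  by rewrite -(eq_bigr _ (fun i _ => hornerX (lam i))) -Htr horner_mx_X frob_sqr mxtrace_mulC.
have lam_le i : lam i <= frob Phi ^+ 2.
  by rewrite -sum_lam (bigD1 i) //= lerDl sumr_ge0.
have phi_ge1 : 1 <= phi by rewrite le_max lexx orbT.
have frob_sqr_le : 4 * frob Phi ^+ 2 <= phi ^+ 2.
  have frob_ge0 : 0 <= 2 * frob Phi by rewrite mulr_ge0 ?sqrtr_ge0.
  have : 2 * frob Phi <= phi by rewrite !le_max lexx.
  nra.
have eta_small : 4 * eta * (1 + n%:R * frob Phi ^+ 2) <= 1.
  apply: (step_size_small eta_gt0 phi_ge1 (sqr_ge0 _) frob_sqr_le).
  by move: eta_le; rewrite le_min => /andP[].
rewrite !(loss_gd_eigen _ _ Htr) mulrCA ler_wpM2l ?invr_ge0 // mulr_sumr.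
apply: ler_sum => i _; rewrite /pair_residual /= mul0r sub0r sqrrN expr1n mulr1.
by rewrite mulrC ler_wpM2r // (residual_gd_pair_sqr_le eta_gt0 _ (lam_le i)).
Qed.
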